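(* Let $\lambda$ be Lebesgue measure on $[0,1]$ and let $T:[0,1]\to[0,1]$ be an invertible, ergodic, $\lambda$-preserving transformation which is rigid rank 1, with associated numbers $n_k$ and sets $A_k$ (as in the context). Let $\mathcal{R}_k=\bigcup_{i=0}^{n_k-1}T^iA_k$ and $$\tilde{\mathcal{R}}_k=\bigcup_{i=0}^{n_k-1}T^i\big(A_k\cap T^{-n_k}A_k\cap T^{-2n_k}A_k\cap T^{n_k}A_k\cap T^{2n_k}A_k\big).$$ Let $\sigma$ be a self-joining of $([0,1],T,\lambda)$ with disintegration $(\sigma_x)_{x\in[0,1]}$ over the first coordinate, chosen so that $\sigma_{Tx}(TE)=\sigma_x(E)$ for every $x\in[0,1]$ and every Borel $E\subset[0,1]$. For $0\le \ell<n_k$, $x\in T^\ell A_k$ and $0\le i<n_k$, let $a_i\in\{0,\dots,n_k-1\}$ be the integer with $a_i\equiv i+\ell \pmod{n_k}$ and set $c_i(x)=\sigma_x(T^{a_i}A_k\cap\mathcal{R}_k)$. Then for every $0\le\ell<n_k$, every $x\in T^\ell A_k$ and every integer $i$ with $-\ell\le i<n_k-\ell$, $$\sum_{j=0}^{n_k-1}|c_j(x)-c_j(T^ix)|\le 2\sigma_x(\tilde{\mathcal{R}}_k^c).$$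
   Context: $T$ is called rigid rank 1 if there exist positive integers $n_j$ and measurable sets $A_j\subset[0,1]$ such that: (1) $\lim_{j\to\infty}\lambda\big(\bigcup_{i=0}^{n_j-1}T^iA_j\big)=1$; (2) the sets $A_j,TA_j,\dots,T^{n_j-1}A_j$ are pairwise disjoint; (3) $\lim_{j\to\infty}\lambda(T^{n_j}A_j\cap A_j)/\lambda(A_j)=1$; (4) for every $\varepsilon>0$ there exist, for each $j$, metric balls $B^{(j)}_0,\dots,B^{(j)}_{n_j-1}\subset[0,1]$ of diameter at most $\varepsilon$ such that $\lim_{j\to\infty}\sum_{i=0}^{n_j-1}\lambda(T^iA_j\setminus B^{(j)}_i)=0$. A self-joining of $([0,1],T,\lambda)$ is a $T\times T$-invariant Borel probability measure on $[0,1]\times[0,1]$ both of whose marginals equal $\lambda$; $\sigma_x$ is regarded as a probability measure on $[0,1]$. By disjointness of the levels $T^\ell A_k$, the index $\ell$ with $x\in T^\ell A_k$ is unique, so $c_i(x)$ is well defined (and $T^ix\in T^{\ell+i}A_k$ for $-\ell\le i<n_k-\ell$, so $c_j(T^ix)$ is defined with $\ell+i$ in place of $\ell$). *)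

From mathcomp Require Import all_boot all_order all_algebra.
From mathcomp Require Import all_classical all_reals all_analysis measurable_realfun.
Set Implicit Arguments. Unset Strict Implicit. Unset Printing Implicit Defensive.
Import Order.TTheory GRing.Theory Num.Theory numFieldNormedType.Exports.
Local Open Scope classical_set_scope.
Local Open Scope ring_scope.

Section Defs.
Variable R : realType.

Definition I01 : set R := `[0%R, 1%R].

Local Notation lam := (@lebesgue_measure R).

(* Integer powers T^i of an invertible map T with inverse Tinv:
   T^m for i = m >= 0 and Tinv^(m+1) for i = -(m+1). *)
Definition Tpow (T Tinv : R -> R) (i : int) : R -> R :=
  match i with
  | Posz m => iter m T
  | Negz m => iter m.+1 Tinv
  end.

Definition invertible01 (T Tinv : R -> R) : Prop :=
  [/\ forall x, I01 x -> I01 (T x) /\ I01 (Tinv x),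
      forall x, I01 x -> Tinv (T x) = x /\ T (Tinv x) = x,
      measurable_fun I01 T & measurable_fun I01 Tinv].

Definition lam_preserving (T : R -> R) : Prop :=
  forall E : set R, measurable E -> E `<=` I01 ->
    lam (I01 `&` T @^-1` E) = lam E.

Definition ergodic01 (T : R -> R) : Prop :=
  forall E : set R, measurable E -> E `<=` I01 ->
    I01 `&` T @^-1` E = E -> lam E = 0%E \/ lam E = 1%E.

Definition small_ball01 (eps : R) (B : set R) : Prop :=
  (exists c r : R, [/\ I01 c, 0 < r & B = ball c r `&` I01]) /\
  (forall y z, B y -> B z -> `|y - z| <= eps).

Definition tower (T Tinv : R -> R) (n : nat) (A : set R) : set R :=
  \bigcup_(i in `I_n) (Tpow T Tinv i%:Z @` A).

Definition rigid_rank1 (T Tinv : R -> R) (n : nat -> nat) (A : nat -> set R)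
  : Prop :=
  [/\ forall j, (0 < n j)%N /\ measurable (A j) /\ A j `<=` I01,
      (fun j => lam (tower T Tinv (n j) (A j))) @ \oo --> 1%E,
      (forall j i i', (i < n j)%N -> (i' < n j)%N -> i <> i' ->
         (Tpow T Tinv i%:Z @` A j) `&` (Tpow T Tinv i'%:Z @` A j) = set0),
      (fun j => fine (lam ((Tpow T Tinv (n j)%:Z @` A j) `&` A j))
                / fine (lam (A j))) @ \oo --> (1 : R) &
      (forall eps : R, 0 < eps -> exists B : nat -> nat -> set R,
         (forall j i, (i < n j)%N -> small_ball01 eps (B j i)) /\
         (fun j => (\sum_(0 <= i < n j)
                      lam ((Tpow T Tinv i%:Z @` A j) `\` B j i))%E)
           @ \oo --> 0%E)].

Definition self_joining (T : R -> R) (sigma : probability (R * R)%type R)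
  : Prop :=
  [/\ sigma (I01 `*` I01) = 1%E,
      forall E : set R, measurable E -> sigma (E `*` setT) = lam (E `&` I01),
      forall E : set R, measurable E -> sigma (setT `*` E) = lam (E `&` I01) &
      forall F : set (R * R), measurable F ->
        sigma ((fun p => (T p.1, T p.2)) @^-1` F) = sigma F].

Definition disintegration (sigma : probability (R * R)%type R)
  (sx : R -> probability R R) : Prop :=
  [/\ forall x, I01 x -> sx x I01 = 1%E,
      forall F : set R, measurable F -> measurable_fun I01 ((fun x => sx x F) : R -> \bar R) &
      forall E F : set R, measurable E -> measurable F ->
        sigma (E `*` F) = (\int[lam]_(x in E `&` I01) sx x F)%E].

Definition equivariant (T : R -> R) (sx : R -> probability R R) : Prop :=
  forall x, I01 x -> forall E : set R, measurable E -> E `<=` I01 ->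
    sx (T x) (T @` E) = sx x E.

Definition good_set (T Tinv : R -> R) (n : nat) (A : set R) : set R :=
  let m := n%:Z in
  tower T Tinv n
    (A `&` (Tpow T Tinv (- m) @` A) `&` (Tpow T Tinv (- (2 * m)) @` A)
       `&` (Tpow T Tinv m @` A) `&` (Tpow T Tinv (2 * m) @` A)).

Definition cfun (T Tinv : R -> R) (n : nat) (A : set R)
  (sx : R -> probability R R) (l i : nat) (x : R) : \bar R :=
  sx x ((Tpow T Tinv ((i + l) %% n)%N%:Z @` A) `&` tower T Tinv n A).

End Defs.
Arguments I01 {R}.

(* By equivariance, c_j(T^i x) = sigma_x(T^-i (T^(a_j + i) A)), so both sums
   compare sigma_x on two families B_j, C_j (j < n) of pairwise disjoint
   subsets of [0,1].  A point z of the good set is z = T^m w with w, T^n w and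
   T^-n w in A, so T^i z lies on level (m + i) mod n for every |i| <= n: the
   two families agree on the good set.  Hence each term is at most
   sigma_x(B_j \ good) + sigma_x(C_j \ good), and disjointness bounds both
   sums by sigma_x(good^c). *)

From mathcomp Require Import all_boot all_order all_algebra.
From mathcomp Require Import all_classical all_reals all_analysis measurable_realfun.
From mathcomp Require Import zify lra.
Set Implicit Arguments. Unset Strict Implicit. Unset Printing Implicit Defensive.
Import Order.TTheory GRing.Theory Num.Theory.
Local Open Scope classical_set_scope.
Local Open Scope ring_scope.

Section measure_defect.
Context {d : measure_display} {X : measurableType d} {R : realType}.
Variable mu : {finite_measure set X -> \bar R}.
Local Open Scope ereal_scope.

Lemma abse_addeK_le (x y z : \bar R) :
  x \is a fin_num -> y \is a fin_num -> z \is a fin_num -> 0 <= x -> 0 <= y ->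
  `|(x + z) - (y + z)| <= x + y.
Proof.
move: x y z => [x||] [y||] [z||] //= _ _ _.
rewrite !lee_fin ler_norml => x0 y0.
by apply/andP; split; lra.
Qed.

Lemma abse_measure_sub_le (B C G : set X) :
  measurable B -> measurable C -> measurable G -> B `&` G = C `&` G ->
  `|mu B - mu C| <= mu (B `\` G) + mu (C `\` G).
Proof.
move=> mB mC mG BCG.
rewrite (measureDI mu mB mG) (measureDI mu mC mG) BCG.
apply: abse_addeK_le; rewrite ?measure_ge0 //; apply: fin_num_measure.
all: by [apply: measurableD | apply: measurableI].
Qed.

Lemma sum_measure_setD_le (U G : set X) N (S : nat -> set X) :
  measurable U -> measurable G ->
  (forall j, (j < N)%N -> measurable (S j) /\ S j `<=` U) -> trivIset `I_N S ->
  \sum_(j < N) mu (S j `\` G) <= mu (U `\` G).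
Proof.
move=> mU mG hS tS.
have mSG j : (j < N)%N -> measurable (S j `\` G).
  by move=> jN; apply: measurableD => //; case: (hS j jN).
rewrite -(measure_semi_additive_ord_I mu (F := fun j => S j `\` G)) //;
  last 2 first.
- exact: trivIset_setIr.
- by apply: bigsetU_measurable => j _; apply: mSG.
apply: le_measure; rewrite ?inE.
- by apply: bigsetU_measurable => j _; apply: mSG.
- exact: measurableD.
rewrite -(bigcup_mkord _ (fun j => S j `\` G)) => z [j /= jN [Sz Gz]].
by split => //; case: (hS j jN) => _; apply.
Qed.

Lemma sum_abse_measure_sub_le (U G : set X) N (B C : nat -> set X) :
  measurable U -> measurable G ->
  (forall j, (j < N)%N ->
     [/\ measurable (B j), measurable (C j), B j `<=` U & C j `<=` U]) ->
  trivIset `I_N B -> trivIset `I_N C ->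
  (forall j, (j < N)%N -> B j `&` G = C j `&` G) ->
  \sum_(0 <= j < N) `|mu (B j) - mu (C j)| <= 2%:E * mu (U `\` G).
Proof.
move=> mU mG hBC tB tC BCG; rewrite big_mkord.
apply: (@le_trans _ _ (\sum_(j < N) (mu (B j `\` G) + mu (C j `\` G)))).
  apply: lee_sum => j _; have [mB mC _ _] := hBC j (ltn_ord j).
  exact: abse_measure_sub_le (BCG j (ltn_ord j)).
have twice (u : \bar R) : u \is a fin_num -> 2%:E * u = u + u.
  by case: u => // u _; rewrite -EFinM -EFinD; congr EFin; lra.
rewrite twice; last by apply: fin_num_measure; exact: measurableD.
rewrite big_split /=; apply: leeD; apply: sum_measure_setD_le => // j jN;
  by have [? ? ? ?] := hBC j jN.
Qed.

End measure_defect.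

Lemma iter_stable {X : Type} (D : set X) (f : X -> X) m z :
  (forall x, D x -> D (f x)) -> D z -> D (iter m f z).
Proof. by move=> fD Dz; elim: m => //= m; apply: fD. Qed.

Lemma measurable_fun_iter {d : measure_display} {X : measurableType d}
    (D : set X) (f : X -> X) m :
  measurable D -> (forall x, D x -> D (f x)) -> measurable_fun D f ->
  measurable_fun D (iter m f).
Proof.
move=> mD fD mf; elim: m => [|m IH]; first exact: measurable_id.
apply: (measurable_comp mD _ mf IH) => _ [z Dz <-].
exact: iter_stable.
Qed.

Section integer_powers.
Variables (R : realType) (T Tinv : R -> R).
Hypothesis hT : invertible01 T Tinv.
Local Notation pow := (Tpow T Tinv).

Lemma measurable_I01 : measurable (@I01 R).
Proof. exact: measurable_itv. Qed.

Lemma Tpow_I01 i z : I01 z -> I01 (pow i z).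
Proof.
have [hI _ _ _] := hT; move=> Iz.
by case: i => m; apply: iter_stable => // x /hI[].
Qed.

Lemma TpowD1 i z : I01 z -> pow (i + 1) z = T (pow i z).
Proof.
have [_ hK _ _] := hT; move=> Iz.
case: i => [m|[|m]].
- by rewrite -PoszD addn1.
- by rewrite /= (hK _ Iz).2.
- have -> : Negz m.+1 + 1 = Negz m by rewrite !NegzE; lia.
  by rewrite [in RHS]/Tpow iterS (hK _ (Tpow_I01 (Negz m) Iz)).2.
Qed.

Lemma TpowB1 i z : I01 z -> pow (i - 1) z = Tinv (pow i z).
Proof.
have [_ hK _ _] := hT; move=> Iz.
case: i => [[|m]|m] //.
- have -> : Posz m.+1 - 1 = Posz m by lia.
  by rewrite [in RHS]/Tpow iterS (hK _ (Tpow_I01 (Posz m) Iz)).1.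
- by have -> : Negz m - 1 = Negz m.+1 by rewrite !NegzE; lia.
Qed.

Lemma TpowD a b z : I01 z -> pow a (pow b z) = pow (a + b) z.
Proof.
move=> Iz; have Ibz := Tpow_I01 b Iz.
elim/int_rec: a => [|m IH|m IH]; first by rewrite add0r.
- by rewrite -addn1 PoszD TpowD1 // IH -TpowD1 // addrAC.
- by rewrite -addn1 PoszD opprD !TpowB1 // IH -TpowB1 // addrAC.
Qed.

Lemma TpowNK i z : I01 z -> pow i (pow (- i) z) = z.
Proof. by move=> Iz; rewrite TpowD // subrr. Qed.

Lemma measurable_fun_Tpow i : measurable_fun I01 (pow i).
Proof.
have [hI _ mT mTinv] := hT; have mI := measurable_I01.
by case: i => m; apply: measurable_fun_iter => // x /hI[].
Qed.

Lemma image_Tpow i E : E `<=` I01 -> pow i @` E = I01 `&` pow (- i) @^-1` E.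
Proof.
move=> EI; apply/seteqP; split => [_ [z Ez <-]|z [Iz Ez]].
- have Iz := EI z Ez.
  by split; [exact: Tpow_I01 | rewrite /preimage /= TpowD // addNr].
- by exists (pow (- i) z) => //; rewrite TpowNK.
Qed.

Lemma measurable_image_Tpow i E :
  measurable E -> E `<=` I01 -> measurable (pow i @` E).
Proof.
move=> mE EI; rewrite image_Tpow //.
exact: measurable_fun_Tpow measurable_I01 _ mE.
Qed.

Lemma image_Tpow_I01 i E : E `<=` I01 -> pow i @` E `<=` I01.
Proof. by move=> EI _ [z /EI Iz <-]; exact: Tpow_I01. Qed.

Lemma image_TpowD a b E :
  E `<=` I01 -> pow (a + b) @` E = pow a @` (pow b @` E).
Proof.
move=> EI; rewrite image_comp; apply: eq_imagel => z /EI Iz.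
by rewrite /= TpowD.
Qed.

Lemma image_TpowNK i E : E `<=` I01 -> pow i @` (pow (- i) @` E) = E.
Proof. by move=> EI; rewrite -image_TpowD // subrr image_id. Qed.

Lemma equivariant_Tpow (sx : R -> probability R R) i : equivariant T sx ->
  forall x, I01 x -> forall E, measurable E -> E `<=` I01 ->
  sx (pow i x) (pow i @` E) = sx x E.
Proof.
move=> hsx; move: i.
pose P i := forall x, I01 x -> forall E, measurable E -> E `<=` I01 ->
  sx (pow i x) (pow i @` E) = sx x E.
have PD a b : P a -> P b -> P (a + b).
  move=> Pa Pb x Ix E mE EI.
  rewrite -TpowD // image_TpowD // Pa ?Pb //.
  - exact: Tpow_I01.
  - exact: measurable_image_Tpow.
  - exact: image_Tpow_I01.
have P1 : P 1 := hsx.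
have PN1 : P (-1).
  move=> x Ix E mE EI.
  rewrite -P1 ?TpowNK ?image_TpowNK //.
  - exact: Tpow_I01.
  - exact: measurable_image_Tpow.
  - exact: image_Tpow_I01.
elim/int_rec => [|m Pm|m Pm].
- by move=> x _ E _ _; rewrite image_id.
- by rewrite -addn1 PoszD; apply: PD.
- by rewrite -addn1 PoszD opprD; apply: PD.
Qed.

Lemma measurable_tower N E :
  measurable E -> E `<=` I01 -> measurable (tower T Tinv N E).
Proof.
by move=> mE EI; apply: bigcup_measurable => p _; exact: measurable_image_Tpow.
Qed.

Lemma tower_I01 N E : E `<=` I01 -> tower T Tinv N E `<=` I01.
Proof. by move=> EI z [p _]; apply: image_Tpow_I01. Qed.

End integer_powers.

Section tower.
Variables (R : realType) (T Tinv : R -> R) (N : nat) (A : set R).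
Hypotheses (hT : invertible01 T Tinv) (N0 : (0 < N)%N).
Hypotheses (mA : measurable A) (AI : A `<=` I01).
Hypothesis disjA : forall p p', (p < N)%N -> (p' < N)%N -> p <> p' ->
  Tpow T Tinv p%:Z @` A `&` Tpow T Tinv p'%:Z @` A = set0.
Local Notation pow := (Tpow T Tinv).
Local Notation level p := (pow p @` A).
Local Notation G := (good_set T Tinv N A).

Lemma modz_in_range (b : int) : 0 <= (b %% N)%Z < N.
Proof. by rewrite modz_ge0 ?ltz_pmod //; lia. Qed.

Lemma measurable_level p : measurable (level p).
Proof. exact: measurable_image_Tpow. Qed.

Lemma level_I01 p : level p `<=` I01.
Proof. exact: image_Tpow_I01. Qed.

Lemma level_inj (p q : int) z :
  0 <= p < N -> 0 <= q < N -> level p z -> level q z -> p = q.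
Proof.
case: p => // p; case: q => // q pN qN zp zq.
have [-> //|/eqP pq] := eqVneq p q.
have : (level p `&` level q) z by [].
by rewrite disjA //; lia.
Qed.

Lemma cfunE (sx : R -> probability R R) l j x :
  cfun T Tinv N A sx l j x = sx x (level ((j%:Z + l%:Z) %% N)%Z).
Proof.
rewrite /cfun -PoszD modz_nat setIidl // => z zl.
by exists ((j + l) %% N)%N => //=; rewrite ltn_pmod.
Qed.

Lemma trivIset_levels (a : int) :
  trivIset `I_N (fun j => level ((j%:Z + a) %% N)%Z).
Proof.
move=> j j' /= jN j'N [z [zj zj']].
move: (level_inj (modz_in_range _) (modz_in_range _) zj zj') => /eqP.
rewrite eqz_modDr !modz_small; first by move=> /eqP [].
all: lia.
Qed.

Lemma measurable_good_set : measurable G.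
Proof.
apply: measurable_tower => //; last by move=> z [[[[/AI]]]].
by repeat apply: measurableI => //; apply: measurable_image_Tpow.
Qed.

Lemma good_set_I01 : G `<=` I01.
Proof. by apply: tower_I01 => // z [[[[/AI]]]]. Qed.

Lemma good_set_level_shift z : G z ->
  exists2 m : int, 0 <= m < N &
    forall i, - N%:Z <= i + m < 2 * N%:Z -> level ((i + m) %% N)%Z (pow i z).
Proof.
case=> m mN [w [[[[Aw [a Aa aw]] _] [b Ab bw]] _] <-].
have {}mN : (m < N)%N := mN.
have Iw := AI Aw.
have Aew (e : int) : -1 <= e <= 1 -> A (pow (e * N%:Z) w).
  move=> e1; have : e = -1 \/ e = 0 \/ e = 1 by lia.
  case=> [->|[->|->]]; rewrite ?mulN1r ?mul0r ?mul1r //.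
  - by rewrite -bw TpowD ?addNr //; exact: AI.
  - by rewrite -aw TpowNK //; exact: AI.
exists m%:Z => [|i im]; first lia.
(* T^(i+m) w = T^(i+m-eN) (T^(eN) w) with T^(eN) w in A and 0 <= i+m-eN < N *)
have [e e1 eim] : exists2 e : int, -1 <= e <= 1 & 0 <= i + m - e * N%:Z < N.
  case: (ltrP (i + m) 0) => h; first by exists (-1); lia.
  by case: (ltrP (i + m) N) => h'; [exists 0 | exists 1]; lia.
have -> : ((i + m) %% N)%Z = i + m - e * N%:Z.
  rewrite -(modz_small eim) -[in LHS](subrK (e * N%:Z) (i + m)).
  by rewrite addrC modzMDl.
by exists (pow (e * N%:Z) w); [exact: Aew | rewrite !TpowD // subrK].
Qed.

Lemma good_set_level_shiftE z a i : G z -> - N%:Z <= i <= N%:Z ->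
  level (a %% N)%Z z <-> level ((a + i) %% N)%Z (pow i z).
Proof.
move=> /good_set_level_shift [m mN zm] iN.
have zm0 : level m z by move: (zm 0); rewrite add0r modz_small //; apply; lia.
have zmi : level ((i + m) %% N)%Z (pow i z) by apply: zm; lia.
split => [za | zai].
- have am : (a %% N)%Z = m := level_inj (modz_in_range a) mN za zm0.
  by have -> : ((a + i) %% N)%Z = ((i + m) %% N)%Z by rewrite -modzDml am addrC.
- have ai : ((a + i) %% N)%Z = ((i + m) %% N)%Z :=
    level_inj (modz_in_range _) (modz_in_range _) zai zmi.
  have -> // : (a %% N)%Z = m.
  apply/eqP; rewrite -[X in _ == X](modz_small mN) -(eqz_modDr i) ai.
  by rewrite (addrC m).
Qed.

Lemma sum_abse_cfun_sub_le (sx : R -> probability R R) l L i x :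
  equivariant T sx -> I01 x -> L%:Z = l%:Z + i -> - N%:Z <= i <= N%:Z ->
  (\sum_(0 <= j < N)
     `|cfun T Tinv N A sx l j x - cfun T Tinv N A sx L j (pow i x)|
   <= 2%:E * sx x (I01 `\` G))%E.
Proof.
move=> hsx Ix hL iN.
pose B j := level ((j%:Z + l%:Z) %% N)%Z.
pose C j := pow (- i) @` level ((j%:Z + (l%:Z + i)) %% N)%Z.
have mC j : measurable (C j) :=
  measurable_image_Tpow hT (- i) (measurable_level _) (@level_I01 _).
have CI j : C j `<=` I01 := image_Tpow_I01 hT (@level_I01 _).
have CE j z : I01 z -> C j z <-> level ((j%:Z + (l%:Z + i)) %% N)%Z (pow i z).
  move=> Iz; rewrite /C image_Tpow ?opprK //; last exact: level_I01.
  by split => [[]|].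
have BC j z : G z -> B j z <-> C j z.
  move=> Gz; rewrite CE ?addrA; last exact: good_set_I01.
  exact: good_set_level_shiftE.
have -> : (\sum_(0 <= j < N)
    `|cfun T Tinv N A sx l j x - cfun T Tinv N A sx L j (pow i x)|
  = \sum_(0 <= j < N) `|sx x (B j) - sx x (C j)|)%E.
  apply: eq_bigr => j _; rewrite !cfunE hL.
  rewrite -(equivariant_Tpow hT i hsx Ix (mC j) (CI j)) /C image_TpowNK //.
  exact: level_I01.
apply: sum_abse_measure_sub_le.
- exact: measurable_I01.
- exact: measurable_good_set.
- by move=> j _; split => //; [exact: measurable_level | exact: level_I01].
- exact: trivIset_levels.
- move=> j j' jN j'N [z [Cz Cz']]; have Iz := CI j z Cz.
  apply: (trivIset_levels (a := l%:Z + i) jN j'N).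
  by exists (pow i z); split; [apply/(CE j) | apply/(CE j')].
- move=> j _; apply/seteqP; split => z [Hz Gz]; split => //; exact/(BC j z Gz).
Qed.

End tower.

Theorem mainTheorem4 (R : realType) (T Tinv : R -> R)
  (n : nat -> nat) (A : nat -> set R)
  (sigma : probability (R * R)%type R) (sx : R -> probability R R) :
  invertible01 T Tinv -> lam_preserving T -> ergodic01 T ->
  rigid_rank1 T Tinv n A ->
  self_joining T sigma -> disintegration sigma sx -> equivariant T sx ->
  forall (k l : nat), (l < n k)%N ->
  forall x : R, (Tpow T Tinv l%:Z @` A k) x ->
  forall i : int, - (l%:Z) <= i -> i < (n k)%:Z - l%:Z ->
  (\sum_(0 <= j < n k)
     `| cfun T Tinv (n k) (A k) sx l j x
        - cfun T Tinv (n k) (A k) sx (absz (l%:Z + i)%R) j (Tpow T Tinv i x) |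
   <= 2%:E * sx x (I01 `\` good_set T Tinv (n k) (A k)))%E.
Proof.
move=> hT _ _ [hA _ disjA _ _] _ _ hsx k l lN x hx i il iN.
have [N0 [mA AI]] := hA k.
have Ix : I01 x by case: hx => w /AI Iw <-; exact: Tpow_I01.
apply: sum_abse_cfun_sub_le => //; first exact: disjA.
all: lia.
Qed.
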